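(* Let $\mathcal{A}=\{A_1,\dots,A_m\}$ be a bimodal collection of pairwise disjoint nonempty subsets of a finite abelian group $G$, with internal difference groups $H_1,\dots,H_m$, labelled so that $|A_i|<|H_i|$ exactly for $i=1,\dots,r$, and suppose $r\ge 2$. For each $i$ let $a_i+H_i$ denote the coset of $H_i$ containing $A_i$. Then there exists a nonempty subset $D\subseteq G$ such that: (1) $a_i+H_i=A_i\sqcup D$ (disjoint union) for every $i\le r$; (2) $(a_i+H_i)\cap(a_j+H_j)=D$ for all distinct $i,j\in\{1,\dots,r\}$; (3) $D$ is a coset of a subgroup of $G$.
   Context: $G$ is written additively. The internal difference group $H_i$ of $A_i$ is the subgroup generated by all $x-y$ with $x,y\in A_i$; $A_i$ lies in a single coset of $H_i$ and $|A_i|\le|H_i|$. A collection $\{A_1,\dots,A_m\}$ of pairwise disjoint subsets of $G$ is bimodal if for every $i$ and every $\delta\in G\setminus\{0\}$, the number $N_i(\delta)$ of pairs $(a,b)$ with $a\in A_i$, $b\in A_j$ for some $j\neq i$, and $a-b=\delta$, satisfies $N_i(\delta)\in\{0,|A_i|\}$. *)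

(* The finite abelian group G is modelled as a finGroupType
   gT with [set: gT] abelian, written multiplicatively: x - y becomes x * y^-1,
   a + H becomes a *: H. *)
From HB Require Import structures.
From mathcomp Require Import all_boot all_fingroup.
Set Implicit Arguments. Unset Strict Implicit. Unset Printing Implicit Defensive.
Local Open Scope group_scope.

Section Defs.
Variable gT : finGroupType.

Definition diffset (A : {set gT}) : {set gT} :=
  [set x * y^-1 | x in A, y in A].

Definition intdiff (A : {set gT}) : {set gT} := <<diffset A>>.

Definition intcoset (A : {set gT}) : {set gT} := repr A *: intdiff A.

Definition Ncount (m : nat) (A : 'I_m -> {set gT}) (i : 'I_m) (delta : gT) : nat :=
  #|[set p : gT * gT | [&& p.1 \in A i,
                          p.2 \in \bigcup_(j | j != i) A j &
                          p.1 * p.2^-1 == delta]]|.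

Definition bimodal (m : nat) (A : 'I_m -> {set gT}) : Prop :=
  (forall i j, i != j -> [disjoint A i & A j]) /\
  (forall i delta, delta != 1 ->
     Ncount A i delta = 0%N \/ Ncount A i delta = #|A i|).

Definition is_coset (D : {set gT}) : Prop :=
  exists (K : {group gT}) (d : gT), D = d *: K.
End Defs.

From mathcomp Require Import all_boot all_fingroup.
Set Implicit Arguments.
Unset Strict Implicit.
Unset Printing Implicit Defensive.
Local Open Scope group_scope.

(* Let W be the union of the A_i.  If a - y = d with a in A_k and y in another
   A_j, bimodality gives every a' in A_k a partner b outside A_k with
   a' - b = d, i.e. b = y + (a' - a); so W \ A_k is invariant under
   translation by H_k, and then so is the complement of W ∪ (a_k + H_k).
   These invariances give (a_k + H_k) ∩ W = A_k, and show that a point of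
   (a_i + H_i) \ A_i outside a_j + H_j forces H_j ⊊ H_i.  When |A_j| < |H_j|,
   a point of (a_j + H_j) \ A_j would then force H_i ⊊ H_j, so
   (a_i + H_i) \ A_i lies in a_j + H_j.  Hence the deficient cosets meet
   pairwise in one set D, a coset of H_i ∩ H_j.  Invariance of S under
   translation by H is expressed as H \subset 'N(S | 'R). *)

Section Translation.
Variable gT : finGroupType.
Implicit Types (S : {set gT}) (H K : {group gT}).

Lemma abelianT_commute : abelian [set: gT] -> forall x y : gT, commute x y.
Proof. by move/centsP=> cGG x y; apply: cGG; rewrite inE. Qed.

Lemma astabsR_in S h : (forall x, x \in S -> x * h \in S) -> h \in 'N(S | 'R).
Proof. by move=> Sh; rewrite !inE; apply/subsetP=> x /Sh; rewrite inE. Qed.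

Lemma astabsR_act S h x : h \in 'N(S | 'R) -> (x * h \in S) = (x \in S).
Proof. exact: astabs_act. Qed.

Lemma lcoset_astabsR H x : H \subset 'N(x *: H | 'R).
Proof.
apply/subsetP=> h hH; apply: astabsR_in => y.
by rewrite !mem_lcoset mulgA (groupMr _ hH).
Qed.

Lemma lcoset_sub_astabsR H S x : H \subset 'N(S | 'R) -> x \in S -> x *: H \subset S.
Proof.
move=> nSH xS; apply/subsetP=> _ /lcosetP[h hH ->].
by rewrite (astabs_act _ (subsetP nSH h hH)).
Qed.

Lemma lcosetI_mem H K a b x :
  x \in a *: H :&: b *: K -> a *: H :&: b *: K = x *: (H :&: K).
Proof.
case/setIP=> /lcoset_eqP <- /lcoset_eqP <-.
by apply/setP=> y; rewrite !inE !mem_lcoset inE.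
Qed.

End Translation.

Canonical intdiff_group (gT : finGroupType) (B : {set gT}) : {group gT} :=
  Eval hnf in [group of intdiff B].

Section InternalDifference.
Variable gT : finGroupType.
Implicit Type B : {set gT}.

Lemma card_intcoset B : #|intcoset B| = #|intdiff B|.
Proof. exact: card_lcoset. Qed.

Lemma intcoset_setD_neq0 B : #|B| < #|intdiff B| -> intcoset B :\: B != set0.
Proof.
rewrite -card_intcoset setD_eq0; apply: contraTN => /subset_leq_card.
by rewrite leqNgt.
Qed.

Lemma intcoset_id B x : x \in intcoset B -> intcoset B = x *: intdiff B.
Proof. by move/lcoset_eqP. Qed.

Lemma subset_intcoset B : abelian [set: gT] -> B \subset intcoset B.
Proof.
move/abelianT_commute=> cG; apply/subsetP=> x xB.
rewrite mem_lcoset cG mem_gen //; apply: imset2_f => //.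
by apply: mem_repr xB.
Qed.

End InternalDifference.

Lemma Ncount_full_partner (gT : finGroupType) m (A : 'I_m -> {set gT}) k d a :
  Ncount A k d = #|A k| -> a \in A k ->
  exists2 b, b \in \bigcup_(j | j != k) A j & a * b^-1 = d.
Proof.
rewrite /Ncount; set P := [set p | _] => cardP aA.
have injP : {in P &, injective fst}.
  move=> [a1 b1] [a2 b2]; rewrite !inE /= => /and3P[_ _ /eqP e1].
  case/and3P=> _ _ /eqP e2 e12; rewrite -{}e12 in e2 *; congr pair.
  by apply: invg_inj; apply: (mulgI a1); rewrite e1 e2.
have sPA : fst @: P \subset A k.
  by apply/subsetP=> _ /imsetP[p /[!inE] /and3P[p1A _ _] ->].
have cardPA : #|fst @: P| = #|A k| by rewrite card_in_imset.
move: aA; rewrite -(subset_cardP cardPA sPA) => /imsetP[[a1 b] /[!inE]].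
by case/and3P=> _ bA /eqP <- /= ->; exists b.
Qed.

Section Bimodal.
Variables (gT : finGroupType) (m : nat) (A : 'I_m -> {set gT}).
Hypotheses (abelG : abelian [set: gT]) (bmA : bimodal A).
Hypothesis A_neq0 : forall i, A i != set0.
Local Notation W := (\bigcup_j A j).

Lemma bigcup_neq_setD k : \bigcup_(j | j != k) A j = W :\: A k.
Proof.
apply/setP=> x; rewrite inE; apply/bigcupP/andP=> [[j jk xAj] | [xAk]].
  by rewrite (disjointFr (bmA.1 _ _ jk) xAj); split=> //; apply/bigcupP; exists j.
by case/bigcupP=> j _ xAj; exists j => //; apply: contraNneq xAk => <-.
Qed.

Lemma bimodal_partner k a a' y :
  a \in A k -> a' \in A k -> y \in W :\: A k ->
  exists2 b, b \in W :\: A k & a' * b^-1 = a * y^-1.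
Proof.
move=> aA a'A yWA; rewrite -bigcup_neq_setD; apply: Ncount_full_partner a'A.
have d_neq1 : a * y^-1 != 1.
  by rewrite -eq_mulgV1; apply: contraTneq yWA => <-; rewrite inE aA.
have [N0 | //] := bmA.2 k _ d_neq1.
move: N0; rewrite /Ncount => /eqP; rewrite cards_eq0 => /eqP/setP/(_ (a, y)).
by rewrite !inE /= aA bigcup_neq_setD yWA eqxx.
Qed.

Lemma intdiff_astabs_others k : intdiff (A k) \subset 'N(W :\: A k | 'R).
Proof.
have cG := abelianT_commute abelG.
rewrite gen_subG; apply/subsetP=> _ /imset2P[a' a a'A aA ->].
apply: astabsR_in => y yWA; have [b bWA e] := bimodal_partner aA a'A yWA.
have -> : y * (a' * a^-1) = b.
  have -> : b = (a * y^-1)^-1 * a' by rewrite -e invMg invgK mulgKV.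
  by rewrite invMg invgK -mulgA (cG a').
exact: bWA.
Qed.

Lemma intcoset_cap_cover k : intcoset (A k) :&: W = A k.
Proof.
have sAC := subset_intcoset (A k) abelG.
apply/eqP; rewrite eqEsubset subsetI sAC (bigcup_sup k isT); apply/andP; split=> //.
apply/subsetP=> x /setIP[xC xW]; apply/negPn/negP=> xA.
have : intcoset (A k) \subset W :\: A k.
  by rewrite (intcoset_id xC) lcoset_sub_astabsR ?intdiff_astabs_others // inE xA.
have /set0Pn[a aA] := A_neq0 k.
by move/subsetP/(_ a (subsetP sAC a aA)); rewrite inE aA.
Qed.

Lemma intcoset_notin_cover k x : x \in intcoset (A k) -> x \notin A k -> x \notin W.
Proof. by move=> xC; apply: contra => xW; rewrite -(intcoset_cap_cover k) inE xC. Qed.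

Lemma intdiff_astabs_uncovered j :
  intdiff (A j) \subset 'N(~: (W :|: intcoset (A j)) | 'R).
Proof.
have -> : W :|: intcoset (A j) = (W :\: A j) :|: intcoset (A j).
  apply/setP=> x; rewrite !inE; have [xA | //] := boolP (x \in A j).
  by rewrite (subsetP (subset_intcoset _ abelG) x xA) !orbT.
rewrite astabsC; apply: subset_trans (astabsU 'R _ _).
by rewrite subsetI intdiff_astabs_others lcoset_astabsR.
Qed.

Lemma intdiff_proper i j x :
  i != j -> x \in intcoset (A i) -> x \notin W -> x \notin intcoset (A j) ->
  intdiff (A j) \proper intdiff (A i).
Proof.
move=> ij xCi xW xCj; set U := ~: (W :|: intcoset (A j)).
have nUHj := intdiff_astabs_uncovered j.
have xU : x \in U by rewrite !inE negb_or xW.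
have /set0Pn[a aA] := A_neq0 i.
have aW : a \in W by apply/bigcupP; exists i.
have aCi : a \in intcoset (A i) by rewrite (subsetP (subset_intcoset _ abelG)).
rewrite properE; apply/andP; split.
  apply/subsetP=> h hHj.
  have ahW : a * h \in W :\: A j.
    rewrite (astabsR_act _ (subsetP (intdiff_astabs_others j) h hHj)) inE aW.
    by rewrite (disjointFr (bmA.1 _ _ ij) aA).
  have [ahCi | ahCi] := boolP (a * h \in intcoset (A i)).
    by rewrite (intcoset_id aCi) mem_lcoset mulKg in ahCi.
  have xhU : x * h \in U by rewrite (astabsR_act _ (subsetP nUHj h hHj)).
  have ahWA : a * h \in W :\: A i.
    rewrite inE (setDP ahW).1 andbT; apply: contra ahCi.
    exact: (subsetP (subset_intcoset _ abelG)).
  have : x * h \in W :\: A i.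
    have aVx : a^-1 * x \in intdiff (A i) by rewrite -mem_lcoset -intcoset_id.
    rewrite -(astabsR_act _ (subsetP (intdiff_astabs_others i) _ aVx)) in ahWA.
    by rewrite -mulgA (abelianT_commute abelG h) mulgA mulKVg in ahWA.
  rewrite !inE negb_or in xhU; case/andP: xhU => /negPf xhW _.
  by rewrite inE xhW andbF.
apply/negP=> sHiHj; have : a \in U.
  apply: (subsetP (lcoset_sub_astabsR nUHj xU)).
  by rewrite -(lcosetS x) -intcoset_id // in sHiHj; apply: (subsetP sHiHj).
by rewrite !inE aW.
Qed.

Lemma intcoset_setD_subset i j :
  i != j -> #|A j| < #|intdiff (A j)| ->
  intcoset (A i) :\: A i \subset intcoset (A j).
Proof.
move=> ij ltAHj; apply/subsetP=> x /setDP[xCi xAi].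
apply/negPn/negP=> xCj.
have ltHji := intdiff_proper ij xCi (intcoset_notin_cover xCi xAi) xCj.
have /set0Pn[c /setDP[cCj cAj]] := intcoset_setD_neq0 ltAHj.
have cCi : c \notin intcoset (A i).
  apply/negP=> cCi; have /set0Pn[b bAj] := A_neq0 j.
  have sCjCi : intcoset (A j) \subset intcoset (A i).
    by rewrite (intcoset_id cCj) (intcoset_id cCi) lcosetS proper_sub.
  have : b \in A i.
    rewrite -(intcoset_cap_cover i) inE (subsetP sCjCi) /=.
      by apply/bigcupP; exists j.
    by rewrite (subsetP (subset_intcoset _ abelG)).
  by move/(disjointFr (bmA.1 _ _ ij)); rewrite bAj.
have ji : j != i by rewrite eq_sym.
have /proper_sub := intdiff_proper ji cCj (intcoset_notin_cover cCj cAj) cCi.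
by apply/negP; apply: proper_subn.
Qed.

Lemma intcosetI i j :
  i != j -> #|A j| < #|intdiff (A j)| ->
  intcoset (A i) :&: intcoset (A j) = intcoset (A i) :\: A i.
Proof.
move=> ij ltAHj; apply/eqP; rewrite eqEsubset subsetI subsetDl.
rewrite intcoset_setD_subset //; apply/andP; split=> //.
apply/subsetP=> x /setIP[xCi xCj]; rewrite inE xCi andbT; apply/negP=> xAi.
have : x \in A j by rewrite -(intcoset_cap_cover j) inE xCj; apply/bigcupP; exists i.
by rewrite (disjointFr (bmA.1 _ _ ij) xAi).
Qed.

End Bimodal.

Theorem proposition3p4 (gT : finGroupType) (m : nat) (A : 'I_m -> {set gT}) :
  abelian [set: gT] ->
  bimodal A ->
  (forall i, A i != set0) ->
  (2 <= #|[set i | #|A i| < #|intdiff (A i)|]|)%N ->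
  exists D : {set gT},
    [/\ D != set0,
        (forall i, #|A i| < #|intdiff (A i)| ->
           intcoset (A i) = A i :|: D /\ [disjoint A i & D]),
        (forall i j, #|A i| < #|intdiff (A i)| -> #|A j| < #|intdiff (A j)| ->
           i != j -> intcoset (A i) :&: intcoset (A j) = D)
      & is_coset D].
Proof.
move=> abelG bmA A_neq0 /card_gt1P[i0 [j0 [+ + ij0]]]; rewrite !inE => ltAHi0 ltAHj0.
have capI := intcosetI abelG bmA A_neq0.
set D := intcoset (A i0) :\: A i0.
have setD_D i : #|A i| < #|intdiff (A i)| -> intcoset (A i) :\: A i = D.
  move=> ltAH; have [-> // | ii0] := eqVneq i i0.
  by rewrite -(capI _ _ ii0 ltAHi0) setIC capI // eq_sym.
exists D; split.
- exact: intcoset_setD_neq0.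
- move=> i ltAH; rewrite -(setD_D i ltAH); split.
    rewrite -{1}(setID (intcoset (A i)) (A i)).
    by rewrite (setIidPr (subset_intcoset _ abelG)).
  by rewrite disjoint_sym disjoints_subset setDE subsetIr.
- by move=> i j ltAH ltAHj ij; rewrite capI // setD_D.
have /set0Pn[z zD] := intcoset_setD_neq0 ltAHi0.
exists (intdiff_group (A i0) :&: intdiff_group (A j0))%G, z.
by rewrite /D -(capI _ _ ij0 ltAHj0) in zD *; apply: lcosetI_mem.
Qed.
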